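(* Let $Q_{1}=(Q_{1,i})_{i\in[d]}$ and $Q_{2}=(Q_{2,i})_{i\in[d]}$ be nonnegative vectors with $Q_{1,i}+Q_{2,i}>0$ for all $i\in[d]$, let $I_0\subset[d]$ be the largest reference set (so that $Q_{1,i}=bQ_{2,i}$ for all $i\in I_0$ for some $b>0$, and every $i\notin I_0$ is differential with respect to $I_0$), and let $I_1=[d]\setminus I_0$. Run the following iterative procedure: set $U_{(0)}=\emptyset$, $V_{(0)}=[d]$; for $t=0,1,\ldots$, (a) compute $M(V_{(t)})=\mathrm{Median}\{R_i(V_{(t)}):i\in V_{(t)}\}$; (b) set $W_{(t)}=W^{+}(V_{(t)})\cup W^{-}(V_{(t)})$ if $M(V_{(t)})=0$, $W_{(t)}=W^{-}(V_{(t)})\cup W^{o}(V_{(t)})$ if $M(V_{(t)})>0$, and $W_{(t)}=W^{+}(V_{(t)})\cup W^{o}(V_{(t)})$ if $M(V_{(t)})<0$; (c) set $U_{(t+1)}=U_{(t)}\cup W_{(t)}$, $V_{(t+1)}=V_{(t)}\setminus W_{(t)}$, and stop if $W_{(t)}=\emptyset$. Let $T$ be the iteration at which the loop stops, and set $\hat I_0=V_{(T)}$, $\hat I_1=U_{(T)}$. If $|I_0|>d/2$, then $$T\le |I_1|+1,\qquad \hat I_0=I_0,\qquad \hat I_1=I_1.$$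
   Context: $[d]=\{1,\ldots,d\}$. $Q_{k,i}$ denotes the (known) expected relative abundance of component $i$ in population $k\in\{1,2\}$. A subset $I_0\subset[d]$ is a reference set if there exists $b>0$ with $Q_{1,i}=bQ_{2,i}$ for all $i\in I_0$; component $i$ is differential with respect to $I_0$ if $Q_{1,i}/\sum_{i'\in I_0}Q_{1,i'}\ne Q_{2,i}/\sum_{i'\in I_0}Q_{2,i'}$. For $I\subset[d]$ and $i\in I$, $R_i(I)=Q_{1,i}/\sum_{i'\in I}Q_{1,i'}-Q_{2,i}/\sum_{i'\in I}Q_{2,i'}$, and $W^{+}(I)=\{i\in I:R_i(I)>0\}$, $W^{-}(I)=\{i\in I:R_i(I)<0\}$, $W^{o}(I)=\{i\in I:R_i(I)=0\}$. *)

From HB Require Import structures.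
From mathcomp Require Import all_boot all_order all_algebra.
Set Implicit Arguments. Unset Strict Implicit. Unset Printing Implicit Defensive.
Import Order.TTheory GRing.Theory Num.Theory.
Local Open Scope ring_scope.

Section Defs.
Variables (R : realFieldType) (d : nat) (Q1 Q2 : 'I_d -> R).

Definition reference_set (I0 : {set 'I_d}) : Prop :=
  exists2 b : R, 0 < b & forall i, i \in I0 -> Q1 i = b * Q2 i.

Definition differential (I0 : {set 'I_d}) (i : 'I_d) : Prop :=
  Q1 i / (\sum_(j in I0) Q1 j) != Q2 i / (\sum_(j in I0) Q2 j).

Definition Rval (I : {set 'I_d}) (i : 'I_d) : R :=
  Q1 i / (\sum_(j in I) Q1 j) - Q2 i / (\sum_(j in I) Q2 j).

Definition Wplus (I : {set 'I_d}) : {set 'I_d} := [set i in I | 0 < Rval I i].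
Definition Wminus (I : {set 'I_d}) : {set 'I_d} := [set i in I | Rval I i < 0].
Definition Wzero (I : {set 'I_d}) : {set 'I_d} := [set i in I | Rval I i == 0].

Definition median (s : seq R) : R :=
  let t := sort <=%R s in
  let n := size t in
  if n == 0%N then 0
  else if odd n then nth 0 t n./2
  else (nth 0 t n./2.-1 + nth 0 t n./2) / 2%:R.

Definition Mval (V : {set 'I_d}) : R := median [seq Rval V i | i <- enum V].

Definition Wset (V : {set 'I_d}) : {set 'I_d} :=
  if Mval V == 0 then Wplus V :|: Wminus V
  else if 0 < Mval V then Wminus V :|: Wzero V
  else Wplus V :|: Wzero V.

Definition step (UV : {set 'I_d} * {set 'I_d}) : {set 'I_d} * {set 'I_d} :=
  let W := Wset UV.2 in (UV.1 :|: W, UV.2 :\: W).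

Definition UVt (t : nat) : {set 'I_d} * {set 'I_d} := iter t step (set0, setT).

End Defs.

From HB Require Import structures.
From mathcomp Require Import all_boot all_order all_algebra.
From mathcomp Require Import zify ring.
Import Order.TTheory GRing.Theory Num.Theory Num.Def.
Local Open Scope ring_scope.
Set Implicit Arguments. Unset Strict Implicit.

(* Write S_k(V) for the sum of the Q_k i over i in V and let b be the ratio on
   I0.  As long as I0 is contained in V, every residual R_i(V) with i in I0 has
   the sign of e(V) = b S_2(V) - S_1(V).  These residuals are a strict majority
   and each sign class is convex, so the median has that sign too; hence
   W(V) = {i in V | sg R_i(V) <> sg M(V)} never meets I0.  Moreover W(V) is empty
   only when V = I0: if e(V) <> 0, because the residuals sum to zero; if
   e(V) = 0, because then R_i(V) = 0 exactly when Q_1i = b Q_2i, which fails off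
   I0.  So V_(t) shrinks strictly until it reaches I0, within |I1| steps. *)

Section MedianOfMajority.
Variables (R : realFieldType) (P : pred R).
Hypothesis P_convex : forall x y z, x <= y -> y <= z -> P x -> P z -> P y.

Lemma nth_sort_majority (s : seq R) k :
  (2 * k <= size s <= 2 * k.+1)%N -> (size s < 2 * count P s)%N ->
  P (nth 0 (sort <=%R s) k).
Proof.
move=> /andP[lo hi] maj; set t := sort <=%R s.
have size_t : size t = size s by rewrite size_sort.
have count_t : count P t = count P s by apply/permP; rewrite perm_sort.
have k_lt : (k < size t)%N by have := count_size P s; lia.
have t_split : t = take k t ++ nth 0 t k :: drop k.+1 t.
  by rewrite -drop_nth ?cat_take_drop.
have : pairwise <=%R (take k t ++ nth 0 t k :: drop k.+1 t).
  by rewrite -t_split -(sorted_pairwise le_trans); exact: (sort_sorted (@le_total _ R)).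
rewrite pairwise_cat allrel_consr pairwise_cons.
move=> /and3P[/andP[/allP le_k _] _ /andP[/allP k_le _]].
apply/negPn/negP => nPk.
have count_split : count P s = (count P (take k t) + count P (drop k.+1 t))%N.
  by rewrite -count_t {1}t_split count_cat /= (negbTE nPk).
have := count_size P (take k t); have := count_size P (drop k.+1 t).
rewrite size_take k_lt size_drop size_t => le_drop le_take.
have /hasP[x x_in Px] : has P (take k t) by rewrite has_count; lia.
have /hasP[z z_in Pz] : has P (drop k.+1 t) by rewrite has_count; lia.
by rewrite (P_convex (le_k x x_in) (k_le z z_in) Px Pz) in nPk.
Qed.

Lemma median_majority (s : seq R) : (size s < 2 * count P s)%N -> P (median s).
Proof.
move=> maj; have s_gt0 : (0 < size s)%N by have := count_size P s; lia.
have size_t : size (sort <=%R s) = size s by rewrite size_sort.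
have mid k : (2 * k <= size s <= 2 * k.+1)%N -> P (nth 0 (sort <=%R s) k).
  by move=> k_mid; apply: nth_sort_majority.
have := odd_double_half (size s); rewrite -mul2n /median /= size_t (gtn_eqF s_gt0).
case: ifP => [_ /= n_eq|_ /= n_eq]; first by apply: mid; lia.
have le_mid : nth 0 (sort <=%R s) (size s)./2.-1 <= nth 0 (sort <=%R s) (size s)./2.
  apply: (sorted_leq_nth le_trans lexx); rewrite ?inE ?size_t; try lia.
  exact: (sort_sorted (@le_total _ R)).
have [lo hi] := midf_le le_mid.
by apply: (P_convex lo hi); apply: mid; lia.
Qed.

End MedianOfMajority.

Lemma sgr_convex (R : realDomainType) (x y z : R) :
  x <= y -> y <= z -> sgr x = sgr z -> sgr y = sgr x.
Proof.
move=> le_xy le_yz; have [x_gt0|x_lt0|x0] := ltrgt0P x.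
- by move=> _; rewrite !gtr0_sg ?(lt_le_trans x_gt0 le_xy).
- rewrite (ltr0_sg x_lt0) => sg_z.
  have z_lt0 : z < 0 by rewrite -sgr_lt0 -sg_z ltrN10.
  by rewrite ltr0_sg ?(le_lt_trans le_yz z_lt0).
- rewrite x0 sgr0 in le_xy * => /esym/eqP; rewrite sgr_eq0 => /eqP z0.
  by apply/eqP; rewrite sgr_eq0 eq_le le_xy -z0 le_yz.
Qed.

Lemma sum_eq0_sgr_neq (R : realDomainType) (I : finType) (A : {pred I})
    (f : I -> R) i0 :
  i0 \in A -> f i0 != 0 -> \sum_(i in A) f i = 0 ->
  exists2 i, i \in A & sgr (f i) != sgr (f i0).
Proof.
move=> i0A fi0 sum0.
have [i /andP[iA neq]|same] := pickP [pred i | (i \in A) && (sgr (f i) != sgr (f i0))].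
  by exists i.
have sum_sg : \sum_(i in A) f i = sgr (f i0) * \sum_(i in A) `|f i|.
  rewrite mulr_sumr; apply: eq_bigr => i iA.
  by have := same i; rewrite /= iA /= => /negbFE/eqP <-; rewrite -numEsg.
have norm_gt0 : 0 < \sum_(i in A) `|f i|.
  by rewrite (bigD1 i0) //= ltr_wpDr ?sumr_ge0 ?normr_gt0.
by move/eqP: sum0; rewrite sum_sg mulf_eq0 sgr_eq0 (negbTE fi0) gt_eqF.
Qed.

Lemma card_le_count_map (T : finType) (X : Type) (A B : {set T}) (f : T -> X)
    (P : pred X) :
  A \subset B -> (forall i, i \in A -> P (f i)) ->
  (#|A| <= count P [seq f i | i <- enum B])%N.
Proof.
move=> AB PA; rewrite count_map -size_filter cardE.
apply: uniq_leq_size (enum_uniq _) _ => i; rewrite mem_enum mem_filter mem_enum => iA.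
by rewrite /preim /= PA // (subsetP AB).
Qed.

Section Residuals.
Variables (R : realFieldType) (d : nat) (Q1 Q2 : 'I_d -> R).
Implicit Types (V : {set 'I_d}) (i : 'I_d) (b : R).
Local Notation S1 V := (\sum_(j in V) Q1 j).
Local Notation S2 V := (\sum_(j in V) Q2 j).
Local Notation Rval := (Rval Q1 Q2).

Lemma sum_Rval V : S1 V != 0 -> S2 V != 0 -> \sum_(i in V) Rval V i = 0.
Proof. by move=> ? ?; rewrite big_split /= sumrN -!mulr_suml !divff // subrr. Qed.

Lemma Rval_eq0 V i b : b != 0 -> S2 V != 0 -> S1 V = b * S2 V ->
  (Rval V i == 0) = (Q1 i == b * Q2 i).
Proof.
move=> b_neq0 S2_neq0 S1_eq.
have -> : Rval V i = (Q1 i - b * Q2 i) / (b * S2 V).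
  by rewrite /Rval S1_eq; field; rewrite b_neq0 S2_neq0.
by rewrite mulf_eq0 invr_eq0 mulf_eq0 (negbTE b_neq0) (negbTE S2_neq0) !orbF subr_eq0.
Qed.

Lemma sgr_Rval_ratio V i b :
  0 < S1 V -> 0 < S2 V -> 0 < Q2 i -> Q1 i = b * Q2 i ->
  sgr (Rval V i) = sgr (b * S2 V - S1 V).
Proof.
move=> S1_gt0 S2_gt0 Q2_gt0 Q1_eq.
have -> : Rval V i = Q2 i / (S1 V * S2 V) * (b * S2 V - S1 V).
  by rewrite /Rval Q1_eq; field; rewrite !gt_eqF.
by rewrite sgrM gtr0_sg ?mul1r // divr_gt0 ?mulr_gt0.
Qed.

Lemma differential_Rval I0 i : differential Q1 Q2 I0 i -> Rval I0 i != 0.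
Proof. by rewrite /differential /Rval subr_eq0. Qed.

Lemma Wset_sgr V :
  Wset Q1 Q2 V = [set i in V | sgr (Rval V i) != sgr (Mval Q1 Q2 V)].
Proof.
have N1_lt1 : (-1 : R) < 1 := lt_trans (ltrN10 R) ltr01.
apply/setP => i; rewrite /Wset !inE.
have [M_gt0|M_lt0|->] := ltrgt0P (Mval Q1 Q2 V);
  rewrite ?(gtr0_sg M_gt0) ?(ltr0_sg M_lt0) ?sgr0 !inE -!andb_orr; case: (i \in V) => //=.
all: have [R_gt0|R_lt0|->] := ltrgt0P (Rval V i);
  rewrite ?(gtr0_sg R_gt0) ?(ltr0_sg R_lt0) ?sgr0 //.
all: by rewrite ?eqxx // ?(eq_sym 0) ?oppr_eq0 ?oner_eq0 ?(lt_eqF N1_lt1) ?(gt_eqF N1_lt1).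
Qed.

End Residuals.

Section ReferenceSet.
Variables (R : realFieldType) (d : nat) (Q1 Q2 : 'I_d -> R) (I0 : {set 'I_d}) (b : R).
Hypotheses (Q1_ge0 : forall i, 0 <= Q1 i) (Q2_ge0 : forall i, 0 <= Q2 i).
Hypotheses (b_gt0 : 0 < b) (Q1_I0 : forall i, i \in I0 -> Q1 i = b * Q2 i).
Hypothesis Q2_I0 : forall i, i \in I0 -> 0 < Q2 i.
Hypothesis I0_differential : forall i, i \notin I0 -> differential Q1 Q2 I0 i.
Hypothesis I0_majority : (d < 2 * #|I0|)%N.

Local Notation S1 V := (\sum_(j in V) Q1 j).
Local Notation S2 V := (\sum_(j in V) Q2 j).
Local Notation Rval := (Rval Q1 Q2).

Lemma sum_gt0_I0 (Q : 'I_d -> R) (V : {set 'I_d}) :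
  (forall i, 0 <= Q i) -> (forall i, i \in I0 -> 0 < Q i) -> I0 \subset V ->
  0 < \sum_(j in V) Q j.
Proof.
move=> Q_ge0 Q_I0 I0V; have /set0Pn[i0 i0I0] : I0 != set0.
  by rewrite -card_gt0; lia.
by rewrite (bigD1 i0) ?(subsetP I0V) //= ltr_wpDr ?sumr_ge0 ?Q_I0.
Qed.

Lemma S1_I0 : S1 I0 = b * S2 I0.
Proof. by rewrite mulr_sumr; apply: eq_bigr => i /Q1_I0. Qed.

Lemma ratio_outside_I0 i : i \notin I0 -> Q1 i != b * Q2 i.
Proof.
move=> /I0_differential /differential_Rval.
by rewrite (Rval_eq0 _ (lt0r_neq0 b_gt0)) ?S1_I0 // lt0r_neq0 //
  (sum_gt0_I0 Q2_ge0 Q2_I0).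
Qed.

Variable V : {set 'I_d}.
Hypothesis I0V : I0 \subset V.

Let S1_gt0 : 0 < S1 V.
Proof. by apply: sum_gt0_I0 => // i iI0; rewrite Q1_I0 ?mulr_gt0 ?Q2_I0. Qed.

Let S2_gt0 : 0 < S2 V.
Proof. exact: sum_gt0_I0. Qed.

Local Notation e := (b * S2 V - S1 V).

Lemma sgr_Rval_I0 i : i \in I0 -> sgr (Rval V i) = sgr e.
Proof.
by move=> iI0; apply: sgr_Rval_ratio; rewrite ?S1_gt0 ?S2_gt0 ?Q1_I0 ?Q2_I0.
Qed.

Lemma sgr_Mval : sgr (Mval Q1 Q2 V) = sgr e.
Proof.
apply/eqP; apply: (median_majority (P := fun x => sgr x == sgr e)).
  by move=> x y z le_xy le_yz /eqP <- /eqP sg_xz; rewrite (sgr_convex le_xy le_yz).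
have le_I0_count := card_le_count_map (P := fun x => sgr x == sgr e) I0V
  (fun i iI0 => introT eqP (sgr_Rval_I0 iI0)).
rewrite size_map -cardE; apply: leq_ltn_trans (max_card V) _; rewrite card_ord.
by apply: leq_trans I0_majority _; rewrite leq_mul2l le_I0_count orbT.
Qed.

Lemma Wset_subD : Wset Q1 Q2 V \subset V :\: I0.
Proof.
apply/subsetP => i; rewrite Wset_sgr !inE => /andP[iV]; rewrite iV andbT.
by apply: contra => iI0; rewrite sgr_Rval_I0 // sgr_Mval.
Qed.

Lemma Wset_neq0 : V != I0 -> Wset Q1 Q2 V != set0.
Proof.
move=> VnI0; rewrite Wset_sgr; apply/set0Pn.
have [e0|e_neq0] := eqVneq e 0.
  have [i iV iI0] : exists2 i, i \in V & i \notin I0.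
    by apply/subsetPn; apply: contra VnI0 => VI0; rewrite eqEsubset VI0.
  exists i; rewrite inE iV sgr_Mval e0 sgr0 sgr_eq0 /=.
  rewrite (Rval_eq0 _ (lt0r_neq0 b_gt0) (lt0r_neq0 S2_gt0)) ?ratio_outside_I0 //.
  by apply/esym/eqP; rewrite -subr_eq0 e0.
have /set0Pn[i0 i0I0] : I0 != set0 by rewrite -card_gt0; lia.
have i0V := subsetP I0V _ i0I0.
have [|i iV] := sum_eq0_sgr_neq (f := Rval V) i0V _
  (sum_Rval (lt0r_neq0 S1_gt0) (lt0r_neq0 S2_gt0)).
  by rewrite -sgr_eq0 sgr_Rval_I0 // sgr_eq0.
by rewrite (sgr_Rval_I0 i0I0) -sgr_Mval => neq; exists i; rewrite inE iV.
Qed.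

End ReferenceSet.

Section Iteration.
Variables (R : realFieldType) (d : nat) (Q1 Q2 : 'I_d -> R) (I0 : {set 'I_d}).
Hypothesis W_subD :
  forall V : {set 'I_d}, I0 \subset V -> Wset Q1 Q2 V \subset V :\: I0.
Hypothesis W_neq0 :
  forall V : {set 'I_d}, I0 \subset V -> V != I0 -> Wset Q1 Q2 V != set0.
Local Notation UV := (UVt Q1 Q2).

Lemma Wset_I0 : Wset Q1 Q2 I0 = set0.
Proof. by apply/eqP; rewrite -subset0 -(setDv I0) W_subD. Qed.

Lemma UVtS t : UV t.+1 = step Q1 Q2 (UV t).
Proof. exact: iterS. Qed.

Lemma UVt_invariant t : I0 \subset (UV t).2 /\ (UV t).1 = ~: (UV t).2.
Proof.
elim: t => [|t [I0V U_eq]]; first by rewrite /UVt /= subsetT setCT.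
rewrite UVtS /=; split; last by rewrite U_eq setDE setCI setCK.
apply/subsetP => i iI0; rewrite inE (subsetP I0V) // andbT.
by apply/negP => /(subsetP (W_subD I0V)); rewrite inE iI0.
Qed.

Lemma UVt_card t : (UV t).2 = I0 \/ (t + #|(UV t).2| <= d)%N.
Proof.
elim: t => [|t IH]; first by right; rewrite /UVt /= cardsT card_ord.
have [I0V _] := UVt_invariant t.
have [VI0|VnI0] := eqVneq (UV t).2 I0.
  by left; rewrite UVtS /= VI0 Wset_I0 setD0.
case: IH => [/eqP|IH]; first by rewrite (negbTE VnI0).
right; rewrite UVtS /=.
have WV : Wset Q1 Q2 (UV t).2 \subset (UV t).2.
  exact: subset_trans (W_subD I0V) (subsetDl _ _).
have := W_neq0 I0V VnI0; rewrite -card_gt0 => W_gt0.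
rewrite cardsD (setIidPr WV); have := subset_leq_card WV; lia.
Qed.

Lemma UVt_stops : exists T : nat,
  [/\ Wset Q1 Q2 (UV T).2 = set0,
      (forall t, (t < T)%N -> Wset Q1 Q2 (UV t).2 != set0),
      (T <= #|~: I0| + 1)%N,
      (UV T).2 = I0 &
      (UV T).1 = ~: I0].
Proof.
have reach_I0 : (UV #|~: I0|).2 == I0.
  have [I0V _] := UVt_invariant #|~: I0|.
  have := cardsC I0; rewrite card_ord => card_I0.
  case: (UVt_card #|~: I0|) => [->//|le_d].
  rewrite eq_sym eqEcard I0V -(leq_add2l #|~: I0|).
  by rewrite [X in (_ <= X)%N]addnC card_I0.
have [T /eqP VT T_min] := ex_minnP (ex_intro (fun t => (UV t).2 == I0) _ reach_I0).
have [_ U_eq] := UVt_invariant T.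
exists T; split => //; first by rewrite VT Wset_I0.
- move=> t t_lt; have [I0V _] := UVt_invariant t; apply: W_neq0 I0V _.
  by apply: contraTneq t_lt => /eqP /T_min; rewrite -leqNgt.
- by rewrite addn1; apply/leqW/T_min.
- by rewrite U_eq VT.
Qed.

End Iteration.

Theorem theorem1 (R : realFieldType) (d : nat) (Q1 Q2 : 'I_d -> R)
    (I0 : {set 'I_d})
    (hQ1 : forall i, 0 <= Q1 i) (hQ2 : forall i, 0 <= Q2 i)
    (hQ : forall i, 0 < Q1 i + Q2 i)
    (hI0ref : reference_set Q1 Q2 I0)
    (hI0max : forall J : {set 'I_d}, reference_set Q1 Q2 J -> (#|J| <= #|I0|)%N)
    (hI0diff : forall i, i \notin I0 -> differential Q1 Q2 I0 i)
    (hmaj : (d < 2 * #|I0|)%N) :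
  let I1 := ~: I0 in
  exists T : nat,
    [/\ Wset Q1 Q2 (UVt Q1 Q2 T).2 = set0,
        (forall t, (t < T)%N -> Wset Q1 Q2 (UVt Q1 Q2 t).2 != set0),
        (T <= #|I1| + 1)%N,
        (UVt Q1 Q2 T).2 = I0 &
        (UVt Q1 Q2 T).1 = I1].
Proof.
case: hI0ref => b b_gt0 Q1_I0.
have Q2_I0 i : i \in I0 -> 0 < Q2 i.
  move=> iI0; have := hQ i.
  by rewrite Q1_I0 // -{2}(mul1r (Q2 i)) -mulrDl pmulr_rgt0 // addr_gt0.
apply: UVt_stops => V I0V.
- exact: (Wset_subD hQ1 hQ2 b_gt0 Q1_I0 Q2_I0 hmaj I0V).
- exact: (Wset_neq0 hQ1 hQ2 b_gt0 Q1_I0 Q2_I0 hI0diff hmaj I0V).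
Qed.
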